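(* Consider the constrained perfect SEIR model described in the context. Along any barrier integral curve $(S,E,I)$ of the admissible set, with nonzero absolutely continuous adjoint $\lambda=(\lambda_1,\lambda_2,\lambda_3)^T$ satisfying $\dot\lambda=\begin{pmatrix}\beta I & -\beta I & 0\\ 0 & \eta & -\eta\\ \beta S & -\beta S & \gamma\end{pmatrix}\lambda$, $\lambda(\bar t)=(0,0,1)^T$, and inputs given by $\bar\beta(t)=\beta_{\max}$ if $\lambda_2-\lambda_1<0$, $\beta_{\min}$ if $\lambda_2-\lambda_1>0$ (arbitrary if $=0$), and $\bar\gamma(t)=\gamma_{\max}$ if $\lambda_3>0$, $\gamma_{\min}$ if $\lambda_3<0$ (arbitrary if $=0$), and whose endpoint $z=(z_1,z_2,z_3)=(S(\bar t),E(\bar t),I(\bar t))$ in the tangent set $\mathcal{T}_{\mathcal{A}}=\{(z_1,z_2,z_3):0\le z_1\le 1-z_2-z_3,\ z_2=\frac{\gamma_{\max}}{\eta}I_{\max},\ z_3=I_{\max}\}$ satisfies $z_1\neq0$, the inputs $\bar\beta$ and $\bar\gamma$ only switch at isolated points in time (i.e. neither $\lambda_2-\lambda_1$ nor $\lambda_3$ vanishes identically on any nonempty open time interval).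
   Context: Perfect SEIR model: fix $\eta>0$, $0<\beta_{\min}\le\beta_{\max}$, $0<\gamma_{\min}\le\gamma_{\max}$, $I_{\max}\in(0,1]$. State $x=(S,E,I)\in\mathbb{R}^3$, inputs Lebesgue measurable $\beta:[t_0,\infty[\to[\beta_{\min},\beta_{\max}]$, $\gamma:[t_0,\infty[\to[\gamma_{\min},\gamma_{\max}]$, dynamics $\dot S=-\beta SI$, $\dot E=\beta SI-\eta E$, $\dot I=\eta E-\gamma I$, written $\dot x=f(x,(\beta,\gamma))$, with constraint $g(x)=I-I_{\max}\le0$. The displayed adjoint equation is $\dot\lambda=-(\partial f/\partial x)^T\lambda$; the input rules come from minimizing the Hamiltonian $\lambda^Tf$ over the input box. A barrier integral curve of the admissible set is a trajectory reaching $\{I=I_{\max}\}$ tangentially at time $\bar t$ whose inputs and adjoint satisfy these conditions. *)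

From HB Require Import structures.
From mathcomp Require Import all_boot all_order all_algebra.
From mathcomp Require Import all_classical all_reals all_analysis.
Set Implicit Arguments. Unset Strict Implicit. Unset Printing Implicit Defensive.
Import Order.TTheory GRing.Theory Num.Theory.
Local Open Scope classical_set_scope.
Local Open Scope ring_scope.

(* Carathéodory (absolutely continuous) solution of the scalar equation
   x' = F a.e. on [a,b]: F is Lebesgue integrable on [a,b] and
   x t = x a + \int_a^t F for every t in [a,b]. *)
Definition ac_sol (R : realType) (a b : R) (x F : R -> R) : Prop :=
  (@lebesgue_measure R).-integrable `[a, b] (EFin \o F) /\
  forall t, a <= t <= b ->
    x t = x a + Rintegral (@lebesgue_measure R) `[a, t] F.

Definition admissible_input (R : realType) (t0 umin umax : R) (u : R -> R) : Prop :=
  measurable_fun `[t0, +oo[ u /\ forall t, t0 <= t -> umin <= u t <= umax.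

Definition seir_trajectory (R : realType) (eta : R) (beta gamma : R -> R)
  (a b : R) (S E I : R -> R) : Prop :=
  [/\ ac_sol a b S (fun s => - (beta s * S s * I s)),
      ac_sol a b E (fun s => beta s * S s * I s - eta * E s) &
      ac_sol a b I (fun s => eta * E s - gamma s * I s)].

(* Adjoint equation  lambda' = -(df/dx)^T lambda, i.e.
   l1' = b I l1 - b I l2,  l2' = eta l2 - eta l3,  l3' = b S l1 - b S l2 + g l3. *)
Definition seir_adjoint (R : realType) (eta : R) (beta gamma : R -> R)
  (a b : R) (S I l1 l2 l3 : R -> R) : Prop :=
  [/\ ac_sol a b l1 (fun s => beta s * I s * l1 s - beta s * I s * l2 s),
      ac_sol a b l2 (fun s => eta * l2 s - eta * l3 s) &
      ac_sol a b l3 (fun s => beta s * S s * l1 s - beta s * S s * l2 s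
                              + gamma s * l3 s)].

(* Hamiltonian-minimizing input rules. *)
Definition beta_rule (R : realType) (bmin bmax : R) (l1 l2 beta : R -> R) (t : R) :=
  (l2 t - l1 t < 0 -> beta t = bmax) /\ (l2 t - l1 t > 0 -> beta t = bmin).
Definition gamma_rule (R : realType) (gmin gmax : R) (l3 gamma : R -> R) (t : R) :=
  (l3 t > 0 -> gamma t = gmax) /\ (l3 t < 0 -> gamma t = gmin).

Definition tangent_set (R : realType) (eta gmax Imax z1 z2 z3 : R) : Prop :=
  [/\ 0 <= z1, z1 <= 1 - z2 - z3, z2 = gmax / eta * Imax & z3 = Imax].

From HB Require Import structures.
From mathcomp Require Import all_boot all_order all_algebra.
From mathcomp Require Import all_classical all_reals all_analysis.
From mathcomp Require Import ring lra.
Set Implicit Arguments. Unset Strict Implicit. Unset Printing Implicit Defensive.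
Import numFieldNormedType.Exports.
Import Order.TTheory GRing.Theory Num.Theory.
Local Open Scope classical_set_scope.
Local Open Scope ring_scope.

(* If lambda2 - lambda1 (resp. lambda3) vanished on an interval, the adjoint
   equations would degenerate there: the components that are constant have
   derivatives of the form k * h, with k one of eta, beta, gamma (bounded below
   by a positive constant) and h continuous, and an absolutely continuous
   constant function with such a derivative forces h = 0.  Chaining this
   through the three equations (in the second case using that S never
   vanishes, by uniqueness for the equation S' = -(beta I) S, linear in S, and
   S(tbar) <> 0) gives lambda1 = lambda2 = lambda3 = 0 inside the interval,
   contradicting the nontriviality of the adjoint. *)

Section ac_sol_theory.
Variable R : realType.
Notation mu := (@lebesgue_measure R).
Implicit Types (a b u v s t c m : R) (x F : R -> R).

Lemma Rintegral_itv_cst u v c : u <= v -> Rintegral mu `[u, v] (fun=> c) = c * (v - u).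
Proof.
move=> uv; rewrite Rintegral_cst //; congr (_ * _).
have := lebesgue_measure_itv `[u, v]; rewrite /= lte_fin => ->.
case: ifPn => [//|]; rewrite -leNgt => vu.
have -> : v = u by apply/eqP; rewrite eq_le vu uv.
by rewrite subrr.
Qed.

Lemma integrable_itv_cst u v c : mu.-integrable `[u, v] (EFin \o fun=> c).
Proof.
apply: measurable_bounded_integrable => //.
- have := lebesgue_measure_itv `[u, v]; rewrite /= => ->.
  by case: ifP => _; [exact: ltry | exact: lt0y].
- by exists `|c|; split => // M cM t _; exact: ltW.
Qed.

Lemma Rintegral_itv_le u v c F : u <= v -> mu.-integrable `[u, v] (EFin \o F) ->
  (forall t, u <= t <= v -> F t <= c) -> Rintegral mu `[u, v] F <= c * (v - u).
Proof.
move=> uv iF Fc; rewrite -Rintegral_itv_cst //.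
by apply: le_Rintegral => //; exact: integrable_itv_cst.
Qed.

Lemma Rintegral_itv_ge u v c F : u <= v -> mu.-integrable `[u, v] (EFin \o F) ->
  (forall t, u <= t <= v -> c <= F t) -> c * (v - u) <= Rintegral mu `[u, v] F.
Proof.
move=> uv iF Fc; rewrite -Rintegral_itv_cst //.
by apply: le_Rintegral => //; exact: integrable_itv_cst.
Qed.

Lemma ac_sol_integrableS a b u v x F : ac_sol a b x F -> a <= u -> v <= b ->
  mu.-integrable `[u, v] (EFin \o F).
Proof.
move=> [iF _] au vb; apply: integrableS iF => //.
by apply: subset_itvScc; rewrite bnd_simp.
Qed.

Lemma ac_solB a b u v x F : ac_sol a b x F -> a <= u -> u <= v -> v <= b ->
  x v - x u = Rintegral mu `[u, v] F.
Proof.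
move=> sol au uv vb; have [_ xE] := sol.
rewrite (xE v) ?(le_trans au uv) // (xE u) ?au ?(le_trans uv vb) //.
rewrite opprD addrACA subrr add0r.
have iF := ac_sol_integrableS sol (lexx a) vb.
rewrite (Rintegral_itvB iF) ?bnd_simp // Rintegral_itv_obnd_cbnd //.
by apply: integrableS iF => //; apply: subset_itv; rewrite bnd_simp.
Qed.

Lemma ac_sol_continuous a b u v x F : ac_sol a b x F -> a <= u -> v <= b ->
  {in `]u, v[, continuous x}.
Proof.
move=> [iF xE] au vb t; rewrite in_itv /= => /andP[ut tv].
have a_t := le_lt_trans au ut; have t_b := lt_le_trans tv vb.
have ab := lt_trans a_t t_b.
have := parameterized_integral_continuous (ltW ab) iF.
move=> /(continuous_within_itvP _ ab)[+ _ _].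
move=> /(_ t); rewrite in_itv /= a_t t_b => /(_ isT) /(cvgD (cvg_cst (x a))).
rewrite -(xE t) ?ltW ?a_t // => xt; apply: cvg_trans xt; apply: near_eq_cvg; near=> s.
have : s \in `]a, b[ by near: s; apply: near_in_itvoo; rewrite in_itv /= a_t.
by rewrite in_itv /= => /andP[a_s s_b]; rewrite (xE s) // !ltW.
Unshelve. all: by end_near.
Qed.

Lemma ac_sol_cst a b u v x F : ac_sol a b x F -> a <= u -> v <= b ->
  {in `]u, v[, forall t, F t = 0} -> {in `]u, v[ &, forall s t, x s = x t}.
Proof.
move=> sol au vb F0 s t suv tuv.
wlog st : s t suv tuv / s <= t.
  by move=> hw; case: (leP s t) => [|/ltW] st; [exact: hw | apply/esym/hw].
move: (suv) (tuv); rewrite !in_itv /= => /andP[us _] /andP[_ tv].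
apply/eqP; rewrite eq_sym -subr_eq0.
rewrite (ac_solB sol) ?(le_trans au (ltW us)) ?(le_trans (ltW tv) vb) //.
rewrite (@eq_Rintegral _ _ _ _ _ (fun=> 0)) ?Rintegral_cst ?mul0r // => r.
rewrite inE /= in_itv /= => /andP[sr rt]; apply: F0.
by rewrite in_itv /= (lt_le_trans us sr) (le_lt_trans rt tv).
Qed.

(* Near y, h y * F = k * (h y * h) is at least m * h y ^+ 2 / 2 > 0, so its
   integral over a small interval around y is positive, whereas the constancy of
   x makes that integral vanish. *)
Lemma ac_sol_cst_factor_eq0 a b u v m x F (k h : R -> R) :
  ac_sol a b x F -> a <= u -> v <= b -> 0 < m ->
  {in `]u, v[ &, forall s t, x s = x t} ->
  {in `]u, v[, forall t, F t = k t * h t} ->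
  {in `]u, v[, forall t, m <= k t} ->
  {in `]u, v[, continuous h} ->
  {in `]u, v[, forall t, h t = 0}.
Proof.
move=> sol au vb m_gt0 xc Fkh km hc y yuv; apply/eqP/contraT => hy_neq0.
have hy2_gt0 : 0 < h y ^+ 2 by rewrite lt_def sqrf_eq0 hy_neq0 sqr_ge0.
have hyh : (h y * h t) @[t --> y] --> h y ^+ 2.
  by apply: cvgM; [exact: cvg_cst | exact: hc].
have : \forall t \near y, h y ^+ 2 / 2 < h y * h t /\ t \in `]u, v[.
  near=> t; split; near: t; [apply: cvgr_gt hyh _ _; lra | exact: near_in_itvoo].
move=> /nbhs_ballP[e /= e_gt0 ballP]; pose d := e / 2.
have [d_gt0 e_2d] : 0 < d /\ e = 2 * d by rewrite /d; split; lra.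
have near_y t : y - d <= t <= y + d -> h y ^+ 2 / 2 < h y * h t /\ t \in `]u, v[.
  move=> /andP[yt ty]; apply: (ballP t); rewrite /ball /= ltr_norml; apply/andP; split; lra.
have [_ yd_l] := near_y (y - d) ltac:(apply/andP; split; lra).
have [_ yd_r] := near_y (y + d) ltac:(apply/andP; split; lra).
move: (yd_l) (yd_r); rewrite !in_itv /= => /andP[ud _] /andP[_ dv].
have iF : mu.-integrable `[y - d, y + d] (EFin \o F).
  exact: ac_sol_integrableS sol (le_trans au (ltW ud)) (le_trans (ltW dv) vb).
have : m * (h y ^+ 2 / 2) * (y + d - (y - d)) <=
       Rintegral mu `[y - d, y + d] (fun t => h y * F t).
  apply: Rintegral_itv_ge; first lra.
    by apply: eq_integrable (integrableZl _ (h y) iF) => // t _ /=; rewrite EFinM.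
  move=> t /near_y[hyht tuv]; rewrite Fkh // [leRHS]mulrCA.
  by apply: ler_pM; rewrite ?km //; lra.
have y_dd : y - d <= y + d by lra.
rewrite RintegralZl // -(ac_solB sol) ?(le_trans au (ltW ud)) ?(le_trans (ltW dv) vb) //.
rewrite (xc _ _ yd_r yd_l) subrr mulr0 leNgt => /negbTE <-.
by apply: mulr_gt0; [apply: mulr_gt0 |]; lra.
Unshelve. all: by end_near.
Qed.

Lemma ac_sol_bounded a b x F : ac_sol a b x F -> a <= b ->
  exists M, forall t, a <= t <= b -> `|x t| <= M.
Proof.
move=> sol ab; have iF := integrable_norm (ac_sol_integrableS sol (lexx a) (lexx b)).
exists (`|x a| + Rintegral mu `[a, b] (fun s => `|F s|)) => t /andP[a_t t_b].
rewrite -[x t](subrK (x a)) (ac_solB sol) // (le_trans (ler_normD _ _)) // addrC lerD2l.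
apply: (le_trans (le_normr_Rintegral _ (ac_sol_integrableS sol (lexx a) t_b))) => //.
rewrite -subr_ge0 (Rintegral_itvB iF) ?bnd_simp //.
by apply: Rintegral_ge0 => s _ /=.
Qed.

Lemma geometric_half_bound_le0 (y M : R) : (forall n, y <= M * 2^-1 ^+ n) -> y <= 0.
Proof.
move=> yM; have geo0 : geometric M 2^-1 @ \oo --> 0.
  by apply: cvg_geometric; rewrite gtr0_norm ?invr_gt0 // invf_lt1 // ltr1n.
rewrite -(cvg_lim _ geo0) //; apply: limr_ge; first exact: cvgP geo0.
by apply: nearW => n; exact: yM.
Qed.

Section vanishing.
Variables (a b C : R) (x F : R -> R).
Hypotheses (sol : ac_sol a b x F) (C_ge0 : 0 <= C).
Hypothesis F_le : forall t, a <= t <= b -> `|F t| <= C * `|x t|.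

Lemma ac_sol_eq0_short s t : a <= s -> s <= t <= b -> C * (t - s) <= 2^-1 ->
  x s = 0 -> x t = 0.
Proof.
move=> a_s /andP[s_t t_b] Cts xs0.
have [M xM] := ac_sol_bounded sol (le_trans a_s (le_trans s_t t_b)).
have M_ge0 : 0 <= M by apply: le_trans (xM s _); rewrite ?a_s ?(le_trans s_t t_b).
(* Each use of the integral equation halves a bound of |x| on [s, t]. *)
suff x_le n : forall r, s <= r <= t -> `|x r| <= M * 2^-1 ^+ n.
  apply/normr0_eq0/eqP; rewrite eq_le normr_ge0 andbT.
  by apply: geometric_half_bound_le0 => n; apply: x_le; rewrite s_t lexx.
elim: n => [|n IH] r /andP[s_r r_t].
  by rewrite expr0 mulr1 xM // (le_trans a_s s_r) (le_trans r_t t_b).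
have a_r := le_trans a_s s_r; have r_b := le_trans r_t t_b.
rewrite -[x r]subr0 -xs0 (ac_solB sol) //.
apply: le_trans (le_normr_Rintegral _ (ac_sol_integrableS sol a_s r_b)) _ => //.
apply: le_trans (Rintegral_itv_le (c := C * (M * 2^-1 ^+ n)) s_r _ _) _.
- exact/integrable_norm/(ac_sol_integrableS sol a_s r_b).
- move=> q /andP[s_q q_r]; apply: le_trans (F_le _) _.
    by rewrite (le_trans a_s s_q) (le_trans q_r r_b).
  by apply: ler_wpM2l => //; apply: IH; rewrite s_q (le_trans q_r r_t).
have B_ge0 : 0 <= M * 2^-1 ^+ n by rewrite mulr_ge0 // exprn_ge0.
have -> : C * (M * 2^-1 ^+ n) * (r - s) = M * 2^-1 ^+ n * (C * (r - s)) by ring.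
rewrite exprSr [leRHS]mulrA; apply: ler_wpM2l => //.
by apply: le_trans Cts; apply: ler_wpM2l => //; lra.
Qed.

Lemma ac_sol_eq0_forward p : a <= p <= b -> x p = 0 -> x b = 0.
Proof.
move=> /andP[a_p p_b] xp0.
have [d d_gt0 Cd] : exists2 d, 0 < d & C * d <= 2^-1.
  have C1_gt0 : 0 < C + 1 by apply: ltr_wpDl.
  exists (2 * (C + 1))^-1; first by rewrite invr_gt0; lra.
  by rewrite ler_pdivrMr; lra.
have reach n t : p <= t <= b -> t <= p + n%:R * d -> x t = 0.
  elim: n t => [|n IH] t /andP[p_t t_b] t_le.
    by rewrite mul0r addr0 in t_le; have -> : t = p by apply/eqP; rewrite eq_le t_le p_t.
  have nd_ge0 : 0 <= n%:R * d by rewrite mulr_ge0 // ltW.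
  case: (leP t (p + n%:R * d)) => [t_le_n|lt_t]; first by apply: IH t_le_n; rewrite p_t.
  rewrite -addn1 natrD mulrDl mul1r addrA in t_le.
  apply: (@ac_sol_eq0_short (p + n%:R * d)); rewrite ?(ltW lt_t) ?t_b //.
  - by rewrite (le_trans a_p) // lerDl.
  - by apply: le_trans Cd; apply: ler_wpM2l => //; lra.
  - by apply: IH; rewrite ?lexx // lerDl nd_ge0 (le_trans (ltW lt_t)).
have [n bn] : exists n, b <= p + n%:R * d.
  exists (Num.Def.archi_bound ((b - p) / d)).
  have /archi_boundP/ltW : 0 <= (b - p) / d by rewrite divr_ge0 ?subr_ge0 // ltW.
  by rewrite ler_pdivrMr //; lra.
by apply: reach bn; rewrite p_b lexx.
Qed.

End vanishing.

End ac_sol_theory.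

Section seir.
Variable R : realType.

Lemma seir_susceptible_neq0 (eta bmax t0 tbar : R) (beta gamma S E I : R -> R) :
  seir_trajectory eta beta gamma t0 tbar S E I -> t0 <= tbar ->
  (forall t, t0 <= t <= tbar -> 0 <= beta t <= bmax) ->
  S tbar != 0 -> forall t, t0 <= t <= tbar -> S t != 0.
Proof.
move=> [solS _ solI] t0_tbar beta_in S_tbar t t_in; apply: contra S_tbar => /eqP St0.
have [M IM] := ac_sol_bounded solI t0_tbar.
have t0_in : t0 <= t0 <= tbar by rewrite lexx t0_tbar.
have C_ge0 : 0 <= bmax * M.
  have /andP[beta_ge0 beta_le] := beta_in t0 t0_in.
  by rewrite mulr_ge0 ?(le_trans beta_ge0 beta_le) ?(le_trans _ (IM t0 t0_in)).
apply/eqP/(ac_sol_eq0_forward solS C_ge0 _ t_in St0) => s s_in.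
have /andP[beta_ge0 beta_le] := beta_in s s_in.
rewrite normrN !normrM mulrAC; apply: ler_wpM2r => //.
by apply: ler_pM => //; [rewrite ger0_norm | exact: IM].
Qed.

Section adjoint_switching.
Variables (eta bmin gmin t0 tbar a b : R) (beta gamma S I l1 l2 l3 : R -> R).
Hypothesis adj : seir_adjoint eta beta gamma t0 tbar S I l1 l2 l3.
Hypotheses (t0_a : t0 <= a) (b_tbar : b <= tbar).

Lemma adjoint_eq0_of_switch_beta : 0 < eta -> 0 < gmin ->
  {in `]a, b[, forall t, gmin <= gamma t} ->
  {in `]a, b[, forall t, l2 t = l1 t} ->
  {in `]a, b[, forall t, [/\ l1 t = 0, l2 t = 0 & l3 t = 0]}.
Proof.
move=> eta_gt0 gmin_gt0 gamma_ge l21; have [sol1 sol2 sol3] := adj.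
have l1_cst : {in `]a, b[ &, forall s t, l1 s = l1 t}.
  by apply: (ac_sol_cst sol1 t0_a b_tbar _) => t tab; rewrite l21 // subrr.
have l2_cst : {in `]a, b[ &, forall s t, l2 s = l2 t}.
  by move=> s t sab tab; rewrite !l21 // (l1_cst _ _ sab tab).
have l23 : {in `]a, b[, forall t, l2 t - l3 t = 0}.
  apply: (ac_sol_cst_factor_eq0 (k := fun=> eta) sol2 t0_a b_tbar eta_gt0 l2_cst) => //.
  - by move=> t _; rewrite mulrBr.
  - move=> t tab; apply: cvgB.
      exact: (ac_sol_continuous sol2 t0_a b_tbar tab).
    exact: (ac_sol_continuous sol3 t0_a b_tbar tab).
have l32 t : t \in `]a, b[ -> l3 t = l2 t by move=> tab; apply/esym/eqP; rewrite -subr_eq0 l23.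
have l3_cst : {in `]a, b[ &, forall s t, l3 s = l3 t}.
  by move=> s t sab tab; rewrite !l32 // (l2_cst _ _ sab tab).
have l3_0 : {in `]a, b[, forall t, l3 t = 0}.
  apply: (ac_sol_cst_factor_eq0 (k := gamma) sol3 t0_a b_tbar gmin_gt0 l3_cst) => //.
  - by move=> t tab; rewrite l21 // subrr add0r.
  - exact: ac_sol_continuous sol3 t0_a b_tbar.
by move=> t tab; rewrite -l21 // -l32 // l3_0.
Qed.

Lemma adjoint_eq0_of_switch_gamma : 0 < eta -> 0 < bmin ->
  {in `]a, b[, forall t, bmin <= beta t} ->
  {in `]a, b[, continuous S} -> {in `]a, b[, forall t, S t != 0} ->
  {in `]a, b[, forall t, l3 t = 0} ->
  {in `]a, b[, forall t, [/\ l1 t = 0, l2 t = 0 & l3 t = 0]}.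
Proof.
move=> eta_gt0 bmin_gt0 beta_ge S_cont S_neq0 l3_0; have [sol1 sol2 sol3] := adj.
have l3_cst : {in `]a, b[ &, forall s t, l3 s = l3 t} by move=> s t sab tab; rewrite !l3_0.
have Sl12 : {in `]a, b[, forall t, S t * (l1 t - l2 t) = 0}.
  apply: (ac_sol_cst_factor_eq0 (k := beta) sol3 t0_a b_tbar bmin_gt0 l3_cst) => //.
  - by move=> t tab; rewrite l3_0 //; ring.
  - move=> t tab; apply: cvgM; first exact: S_cont.
    apply: cvgB; first exact: (ac_sol_continuous sol1 t0_a b_tbar tab).
    exact: (ac_sol_continuous sol2 t0_a b_tbar tab).
have l12 : {in `]a, b[, forall t, l1 t = l2 t}.
  move=> t tab; apply/eqP; rewrite -subr_eq0.
  by have /eqP := Sl12 t tab; rewrite mulf_eq0 (negbTE (S_neq0 t tab)).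
have l1_cst : {in `]a, b[ &, forall s t, l1 s = l1 t}.
  by apply: (ac_sol_cst sol1 t0_a b_tbar _) => t tab; rewrite l12 // subrr.
have l2_cst : {in `]a, b[ &, forall s t, l2 s = l2 t}.
  by move=> s t sab tab; rewrite -!l12 // (l1_cst _ _ sab tab).
have l2_0 : {in `]a, b[, forall t, l2 t = 0}.
  apply: (ac_sol_cst_factor_eq0 (k := fun=> eta) sol2 t0_a b_tbar eta_gt0 l2_cst) => //.
  - by move=> t tab; rewrite l3_0 // mulr0 subr0.
  - exact: ac_sol_continuous sol2 t0_a b_tbar.
by move=> t tab; rewrite l12 // l2_0 // l3_0.
Qed.

End adjoint_switching.

End seir.

Theorem proposition3 (R : realType)
  (eta bmin bmax gmin gmax Imax : R)
  (Heta : 0 < eta) (Hb0 : 0 < bmin) (Hb : bmin <= bmax)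
  (Hg0 : 0 < gmin) (Hg : gmin <= gmax) (HI0 : 0 < Imax) (HI1 : Imax <= 1)
  (t0 tbar : R) (Ht : t0 < tbar)
  (beta gamma : R -> R) (S E I l1 l2 l3 : R -> R) :
  admissible_input t0 bmin bmax beta ->
  admissible_input t0 gmin gmax gamma ->
  seir_trajectory eta beta gamma t0 tbar S E I ->
  (forall t, t0 <= t <= tbar -> I t - Imax <= 0) ->
  seir_adjoint eta beta gamma t0 tbar S I l1 l2 l3 ->
  (forall t, t0 <= t <= tbar -> ~ [/\ l1 t = 0, l2 t = 0 & l3 t = 0]) ->
  l1 tbar = 0 -> l2 tbar = 0 -> l3 tbar = 1 ->
  (forall t, t0 <= t <= tbar -> beta_rule bmin bmax l1 l2 beta t) ->
  (forall t, t0 <= t <= tbar -> gamma_rule gmin gmax l3 gamma t) ->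
  tangent_set eta gmax Imax (S tbar) (E tbar) (I tbar) ->
  S tbar <> 0 ->
  forall a b, t0 <= a -> a < b -> b <= tbar ->
    ~ (forall t, a < t < b -> l2 t - l1 t = 0) /\
    ~ (forall t, a < t < b -> l3 t = 0).
Proof.
move=> [_ beta_in] [_ gamma_in] traj _ adj adj_neq0 _ _ _ _ _ _ S_tbar.
move=> a b t0_a ab b_tbar.
have ab_sub t : t \in `]a, b[ -> t0 <= t <= tbar.
  rewrite in_itv /= => /andP[a_t t_b].
  by rewrite (le_trans t0_a (ltW a_t)) (le_trans (ltW t_b) b_tbar).
have beta_ge : {in `]a, b[, forall t, bmin <= beta t}.
  by move=> t /ab_sub /andP[t0_t _]; have /andP[] := beta_in t t0_t.
have gamma_ge : {in `]a, b[, forall t, gmin <= gamma t}.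
  by move=> t /ab_sub /andP[t0_t _]; have /andP[] := gamma_in t t0_t.
have S_neq0 : {in `]a, b[, forall t, S t != 0}.
  move=> t /ab_sub; apply: (seir_susceptible_neq0 (bmax := bmax) traj (ltW Ht)); last exact/eqP.
  move=> s /andP[t0_s _]; have /andP[bmin_le ->] := beta_in s t0_s.
  by rewrite andbT (le_trans (ltW Hb0)).
have [solS _ _] := traj.
have mid_ab : (a + b) / 2 \in `]a, b[ by rewrite in_itv /=; apply/andP; split; lra.
split => [l21 | l3_0]; apply: (adj_neq0 _ (ab_sub _ mid_ab)).
- apply: (adjoint_eq0_of_switch_beta adj t0_a b_tbar Heta Hg0 gamma_ge) mid_ab => t.
  by rewrite in_itv /= => /l21 /eqP; rewrite subr_eq0 => /eqP.
- apply: (adjoint_eq0_of_switch_gamma adj t0_a b_tbar Heta Hb0 beta_ge _ S_neq0) mid_ab.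
    exact: ac_sol_continuous solS t0_a b_tbar.
  by move=> t; rewrite in_itv /=; exact: l3_0.
Qed.
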